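(* Let $\pi$ be a group with an epimorphism $\phi\colon\pi\to\mathbb{Z}=\langle t\rangle$. Suppose $\pi$ is an ascending HNN extension of a finitely generated group $B$ compatible with $\phi$, i.e. $\pi=\langle t,B\mid t^{-1}bt=\varphi(b),\ b\in B\rangle$ for a monomorphism $\varphi\colon B\to B$, with $\phi(t)=1$ and $\phi(B)=0$. Then the top coefficient of the Alexander polynomial $\Delta_{\pi,\phi}$ equals $\pm1$. Likewise, if $\pi$ is a descending HNN extension of a finitely generated group $B$ compatible with $\phi$ (i.e. $\pi=\langle t,B\mid tbt^{-1}=\varphi(b),\ b\in B\rangle$ with $\varphi\colon B\to B$ a monomorphism, $\phi(t)=1$, $\phi(B)=0$), then the bottom coefficient of $\Delta_{\pi,\phi}$ equals $\pm1$.
   Context: For a group $\pi$ with epimorphism $\phi\colon\pi\to\mathbb{Z}=\langle t\rangle$, the Alexander module is $H_1(\pi;\mathbb{Z}[t^{\pm1}])=H_1(\operatorname{Ker}\phi;\mathbb{Z})$, a $\mathbb{Z}[t^{\pm1}]$-module with $t$ acting via conjugation by a lift of $t$. The Alexander polynomial $\Delta_{\pi,\phi}\in\mathbb{Z}[t^{\pm1}]$ is the order of this module (the gcd of the maximal minors of a presentation matrix), well defined up to multiplication by units $\pm t^j$; in particular its top and bottom coefficients are well defined up to sign. *)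

(* Abstract (possibly infinite) groups are given by an explicit
   record of operations and axioms. *)
From HB Require Import structures.
From mathcomp Require Import all_boot all_order all_algebra.
Set Implicit Arguments. Unset Strict Implicit. Unset Printing Implicit Defensive.
Import Order.TTheory GRing.Theory Num.Theory.
Local Open Scope ring_scope.

Record group := Group {
  gcar :> Type;
  gmul : gcar -> gcar -> gcar;
  gone : gcar;
  ginv : gcar -> gcar;
  gmulA : forall x y z, gmul x (gmul y z) = gmul (gmul x y) z;
  gmul1 : forall x, gmul gone x = x;
  gmulV : forall x, gmul (ginv x) x = gone }.

Definition is_hom (G H : group) (f : G -> H) : Prop :=
  forall x y, f (gmul x y) = gmul (f x) (f y).

Definition is_hom_Z (G : group) (f : G -> int) : Prop :=
  forall x y, f (gmul x y) = f x + f y.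

Definition is_epi_Z (G : group) (f : G -> int) : Prop :=
  is_hom_Z f /\ forall z : int, exists x, f x = z.

Inductive gen (G : group) (S : G -> Prop) : G -> Prop :=
  | gen_base x : S x -> gen S x
  | gen_one : gen S (gone G)
  | gen_mul x y : gen S x -> gen S y -> gen S (gmul x y)
  | gen_inv x : gen S x -> gen S (ginv x).

Definition fin_gen (G : group) : Prop :=
  exists (n : nat) (g : 'I_n -> G), forall x : G, gen (fun y => exists i, y = g i) x.

Definition ascHNN (pi : group) (phi : pi -> int) : Prop :=
  exists (B : group) (psi : B -> B) (iota : B -> pi) (t : pi),
    [/\ fin_gen B /\ is_hom psi /\ injective psi /\ is_hom iota,
        phi t = 1, (forall b, phi (iota b) = 0),
        (forall b, gmul (gmul (ginv t) (iota b)) t = iota (psi b)) &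
        (forall (G : group) (g : G) (f : B -> G), is_hom f ->
           (forall b, gmul (gmul (ginv g) (f b)) g = f (psi b)) ->
           exists h : pi -> G,
             [/\ is_hom h, h t = g, (forall b, h (iota b) = f b) &
                 forall h' : pi -> G, is_hom h' -> h' t = g ->
                   (forall b, h' (iota b) = f b) -> forall x, h' x = h x])].

Definition descHNN (pi : group) (phi : pi -> int) : Prop :=
  exists (B : group) (psi : B -> B) (iota : B -> pi) (t : pi),
    [/\ fin_gen B /\ is_hom psi /\ injective psi /\ is_hom iota,
        phi t = 1, (forall b, phi (iota b) = 0),
        (forall b, gmul (gmul t (iota b)) (ginv t) = iota (psi b)) &
        (forall (G : group) (g : G) (f : B -> G), is_hom f ->
           (forall b, gmul (gmul g (f b)) (ginv g) = f (psi b)) ->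
           exists h : pi -> G,
             [/\ is_hom h, h t = g, (forall b, h (iota b) = f b) &
                 forall h' : pi -> G, is_hom h' -> h' t = g ->
                   (forall b, h' (iota b) = f b) -> forall x, h' x = h x])].

Section Alex.
Variables (pi : group) (phi : pi -> int) (s : pi).

Definition in_commK (x : pi) : Prop :=
  gen (fun y => exists a b, [/\ phi a = 0, phi b = 0 &
         y = gmul (gmul (ginv a) (ginv b)) (gmul a b)]) x.

Definition prod_list (l : seq pi) : pi := foldr (@gmul pi) (gone pi) l.

Definition gpow (x : pi) (z : int) : pi :=
  match z with
  | Posz n => iter n (gmul x) (gone pi)
  | Negz n => iter n.+1 (gmul (ginv x)) (gone pi)
  end.

(* action of t^i on K: x |-> s^-i x s^i  (s a lift of t) *)
Definition tpow (i : nat) (x : pi) : pi :=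
  iter i (fun y => gmul (gmul (ginv s) y) s) x.

(* p . [x] for p in Z[t], written multiplicatively in pi *)
Definition act (p : {poly int}) (x : pi) : pi :=
  prod_list [seq gpow (tpow i x) p`_i | i <- iota 0 (size p)].

Definition evalv (n : nat) (k : 'I_n -> pi) (v : 'rV[{poly int}]_n) : pi :=
  prod_list [seq act (v ord0 j) (k j) | j <- enum 'I_n].

(* A : 'M_(m,n) (rows = relations) presents H_1(Ker phi) over Z[t^{+-1}]
   with respect to the generators k_1..k_n (entries cleared of negative
   powers of t, which is no loss of generality). *)
Definition presents (n m : nat) (k : 'I_n -> pi) (A : 'M[{poly int}]_(m, n)) : Prop :=
  [/\ (forall j, phi (k j) = 0),
      (forall x, phi x = 0 -> exists (N : nat) (v : 'rV[{poly int}]_n),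
          in_commK (gmul (ginv (tpow N x)) (evalv k v))),
      (forall r : 'I_m, in_commK (evalv k (row r A))) &
      (forall v : 'rV[{poly int}]_n, in_commK (evalv k v) ->
          exists (N : nat) (w : 'rV[{poly int}]_m), 'X^N *: v = w *m A)].
End Alex.

(* divisibility in Z[t^{+-1}] for elements represented by polynomials *)
Definition ldvd (p q : {poly int}) : Prop :=
  exists (N : nat) (r : {poly int}), 'X^N * q = r * p.

Definition minor (n m : nat) (A : 'M[{poly int}]_(m, n)) (f : 'I_n -> 'I_m) : {poly int} :=
  \det (rowsub f A).

Definition gcd_minors (n m : nat) (A : 'M[{poly int}]_(m, n)) (d : {poly int}) : Prop :=
  (forall f, ldvd d (minor A f)) /\
  (forall e, (forall f, ldvd e (minor A f)) -> ldvd e d).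

(* d represents the Alexander polynomial Delta_{pi,phi} (up to units +-t^j) *)
Definition is_alex_poly (pi : group) (phi : pi -> int) (d : {poly int}) : Prop :=
  exists (s : pi) (n m : nat) (k : 'I_n -> pi) (A : 'M[{poly int}]_(m, n)),
    [/\ phi s = 1, presents phi s k A & gcd_minors A d].

Definition top_coef (p : {poly int}) : int := lead_coef p.
Definition bot_coef (p : {poly int}) : int := p`_(find (fun c => c != 0) p).

(* Let [H = K/[K,K]] be the Alexander module, [t] acting by conjugation with
   a lift of the generator. In an ascending HNN extension with finitely
   generated base [B], the image [M] of [B] in [H] is finitely generated with
   [tM <= M], so by Cayley-Hamilton the characteristic polynomial [g] of [t]
   on generators of [M], a monic integer polynomial, kills [M]. Every element
   of [K] is conjugated into [B] by a power of [t], i.e. [t^N h \in M] for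
   all [h \in H]; as [t] acts injectively, [g] kills [H]. So [t^a g e_j] is a
   relation for every generator [e_j], and the determinant of these relations
   shows that [Delta] divides [t^a g^n]: its top coefficient is a unit. In the
   descending case [M <= tM], [H] is the union of the [t^N M], and the
   reciprocal characteristic polynomial, with constant term 1, kills [H]; this
   controls the bottom coefficient. *)

From HB Require Import structures.
From mathcomp Require Import all_boot all_order all_algebra perm zify boolp.
Set Implicit Arguments. Unset Strict Implicit. Unset Printing Implicit Defensive.
Import GRing.Theory.
Local Open Scope ring_scope.

Notation "x ** y" := (gmul x y) (at level 40, left associativity).

Lemma iter_inj (T : Type) (f : T -> T) n : injective f -> injective (iter n f).
Proof. by move=> f_inj; elim: n => // n IH x y /f_inj /IH. Qed.

Section GroupTheory.
Variable G : group.
Implicit Types x y z : G.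

Lemma gmulrV x : x ** ginv x = gone G.
Proof.
have -> : x ** ginv x = ginv (ginv x) ** ginv x ** (x ** ginv x) by rewrite gmulV gmul1.
by rewrite -!gmulA (gmulA (ginv x) x) gmulV gmul1 gmulV.
Qed.

Lemma gmulr1 x : x ** gone G = x.
Proof. by rewrite -(gmulV x) gmulA gmulrV gmul1. Qed.

Lemma ginvK x : ginv (ginv x) = x.
Proof. by rewrite -[RHS]gmul1 -(gmulV (ginv x)) -gmulA gmulV gmulr1. Qed.

Lemma gmulKr x y : ginv x ** (x ** y) = y.
Proof. by rewrite gmulA gmulV gmul1. Qed.

Lemma gmulVKr x y : x ** (ginv x ** y) = y.
Proof. by rewrite gmulA gmulrV gmul1. Qed.

Lemma gmulrK x y : y ** x ** ginv x = y.
Proof. by rewrite -gmulA gmulrV gmulr1. Qed.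

Lemma gmulrVK x y : y ** ginv x ** x = y.
Proof. by rewrite -gmulA gmulV gmulr1. Qed.

Lemma gmulrI x y z : x ** y = x ** z -> y = z.
Proof. by move=> e; rewrite -(gmulKr x y) e gmulKr. Qed.

Lemma ginv_uniq x y : x ** y = gone G -> ginv x = y.
Proof. by move=> e; rewrite -[LHS]gmulr1 -e gmulKr. Qed.

Lemma ginvM x y : ginv (x ** y) = ginv y ** ginv x.
Proof. by apply: ginv_uniq; rewrite -gmulA (gmulA y) gmulrV gmul1 gmulrV. Qed.

Lemma ginv1 : ginv (gone G) = gone G.
Proof. by apply: ginv_uniq; rewrite gmul1. Qed.

Definition gconj (g x : G) := ginv g ** x ** g.

Lemma gmul_gconj g x : g ** gconj g x = x ** g.
Proof. by rewrite /gconj !gmulA gmulrV gmul1. Qed.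

Lemma gconjM g x y : gconj g (x ** y) = gconj g x ** gconj g y.
Proof. by rewrite /gconj -!gmulA gmulVKr. Qed.

Lemma gconjV g x : gconj g (ginv x) = ginv (gconj g x).
Proof. by rewrite /gconj !ginvM ginvK gmulA. Qed.

Lemma gconjK g x : gconj (ginv g) (gconj g x) = x.
Proof. by rewrite /gconj ginvK !gmulA gmulrV gmul1 gmulrK. Qed.

Lemma gconjMr g h x : gconj (g ** h) x = gconj h (gconj g x).
Proof. by rewrite /gconj ginvM !gmulA. Qed.

Definition gpw x (n : nat) : G := iter n (gmul x) (gone G).

Lemma gpw0 x : gpw x 0 = gone G.
Proof. by []. Qed.

Lemma gpwS x n : gpw x n.+1 = x ** gpw x n.
Proof. by []. Qed.

Lemma gpwSr x n : gpw x n.+1 = gpw x n ** x.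
Proof.
elim: n => [|n IH]; first by rewrite /gpw /= gmulr1 gmul1.
by rewrite gpwS {1}IH gmulA -gpwS.
Qed.

Lemma gpwVK x n : gpw (ginv x) n ** gpw x n = gone G.
Proof.
elim: n => [|n IH]; first by rewrite gmul1.
by rewrite gpwSr gpwS -gmulA (gmulA (ginv x)) gmulV gmul1 IH.
Qed.

Lemma gconj_gpw g x n :
  iter n (gconj g) x = gpw (ginv g) n ** x ** gpw g n.
Proof.
elim: n => [|n IH]; first by rewrite /gpw /= gmul1 gmulr1.
by rewrite iterS IH /gconj gpwS gpwSr !gmulA.
Qed.

Lemma tpowE g n x : tpow g n x = iter n (gconj g) x.
Proof. by []. Qed.

End GroupTheory.

Section Homomorphisms.
Variables (G H : group) (f : G -> H).
Hypothesis f_hom : is_hom f.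

Lemma hom1 : f (gone G) = gone H.
Proof. by apply: (@gmulrI _ (f (gone G))); rewrite -f_hom gmul1 gmulr1. Qed.

Lemma homV x : f (ginv x) = ginv (f x).
Proof. by apply/esym/ginv_uniq; rewrite -f_hom gmulrV hom1. Qed.

End Homomorphisms.

Section HomomorphismsToZ.
Variables (G : group) (phi : G -> int).
Hypothesis phi_hom : is_hom_Z phi.

Lemma homZ1 : phi (gone G) = 0.
Proof. by apply: (addrI (phi (gone G))); rewrite -phi_hom gmul1 addr0. Qed.

Lemma homZV x : phi (ginv x) = - phi x.
Proof. by apply/eqP; rewrite -addr_eq0 -phi_hom gmulV homZ1. Qed.

Lemma homZ_gconj g x : phi (gconj g x) = phi x.
Proof. by rewrite /gconj !phi_hom homZV addrAC addNr add0r. Qed.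

Lemma homZ_gpw x n : phi (gpw x n) = n%:Z * phi x.
Proof. by elim: n => [|n IH]; rewrite ?homZ1 ?mul0r // gpwS phi_hom IH intS mulrDl mul1r. Qed.

Lemma homZ_iter_gconj g n x : phi (iter n (gconj g) x) = phi x.
Proof. by elim: n => //= n IH; rewrite homZ_gconj. Qed.

Lemma homZ_gpow x z : phi (gpow x z) = z * phi x.
Proof.
case: z => n; first exact: homZ_gpw.
change (gpow x (Negz n)) with (gpw (ginv x) n.+1).
by rewrite homZ_gpw homZV NegzE mulrN mulNr.
Qed.

Lemma homZ_prod_list (I : Type) (F : I -> G) (l : seq I) :
  phi (prod_list (map F l)) = \sum_(i <- l) phi (F i).
Proof. by elim: l => [|i l IH]; rewrite ?big_nil ?homZ1 // big_cons phi_hom IH. Qed.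

End HomomorphismsToZ.

Section GeneratedSubgroup.
Variables (G : group) (S : G -> Prop).

Definition subgen := {x : G | gen S x}.

Definition subgen_mul (a b : subgen) : subgen :=
  exist _ (sval a ** sval b) (gen_mul (svalP a) (svalP b)).
Definition subgen_one : subgen := exist _ (gone G) (gen_one S).
Definition subgen_inv (a : subgen) : subgen := exist _ (ginv (sval a)) (gen_inv (svalP a)).

Lemma subgen_inj (a b : subgen) : sval a = sval b -> a = b.
Proof. by case: a b => [a pa] [b pb] /= ab; apply: eq_exist. Qed.

Lemma subgen_mulA a b c : subgen_mul a (subgen_mul b c) = subgen_mul (subgen_mul a b) c.
Proof. exact/subgen_inj/gmulA. Qed.
Lemma subgen_mul1 a : subgen_mul subgen_one a = a.
Proof. exact/subgen_inj/gmul1. Qed.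
Lemma subgen_mulV a : subgen_mul (subgen_inv a) a = subgen_one.
Proof. exact/subgen_inj/gmulV. Qed.

Definition subgen_group : group := Group subgen_mulA subgen_mul1 subgen_mulV.

End GeneratedSubgroup.

Definition hnn_rel (asc : bool) (G : group) (t x : G) : G :=
  if asc then ginv t ** x ** t else t ** x ** ginv t.

Section HNNGeneration.
Variables (asc : bool) (pi B : group) (psi : B -> B) (iota : B -> pi) (t : pi).
Hypotheses (iota_hom : is_hom iota)
           (iota_rel : forall b, hnn_rel asc t (iota b) = iota (psi b)).

(* Uniqueness in the universal property, applied to the inclusion of the
   subgroup generated by [t] and [iota B], makes that inclusion onto. *)
Lemma hnn_generated :
  (forall (G : group) (g : G) (f : B -> G), is_hom f ->
     (forall b, hnn_rel asc g (f b) = f (psi b)) ->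
     exists h : pi -> G,
       [/\ is_hom h, h t = g, (forall b, h (iota b) = f b) &
           forall h' : pi -> G, is_hom h' -> h' t = g ->
             (forall b, h' (iota b) = f b) -> forall x, h' x = h x]) ->
  forall x, gen (fun y => y = t \/ exists b, y = iota b) x.
Proof.
move=> univ x; set S := fun y => _.
pose H := subgen_group S.
pose g : H := exist _ t (gen_base (or_introl erefl)).
pose f (b : B) : H := exist _ (iota b) (gen_base (or_intror (ex_intro _ b erefl))).
have f_hom : is_hom f by move=> a b; apply/subgen_inj/iota_hom.
have f_rel b : hnn_rel asc g (f b) = f (psi b).
  by apply: subgen_inj; rewrite /= -iota_rel; case: (asc).
have [h [h_hom h_t h_iota _]] := univ _ g f f_hom f_rel.
have [id' [_ _ _ id'_uniq]] := univ pi t iota iota_hom iota_rel.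
have val_h : forall y, sval (h y) = id' y.
  by apply: id'_uniq => [a b|//|b]; rewrite ?h_hom ?h_t ?h_iota.
have -> : x = sval (h x) by rewrite val_h -(id'_uniq id) //.
exact: svalP.
Qed.

End HNNGeneration.

Section NormalForm.
Variables (pi B : group) (psi : B -> B) (iota : B -> pi) (u : pi).
Hypotheses (iota_hom : is_hom iota)
           (iota_rel : forall b, gconj u (iota b) = iota (psi b)).

Definition hnn_normal (x : pi) :=
  exists N M b, x = gpw u N ** iota b ** gpw (ginv u) M.

Lemma iota_gpw b n : iota b ** gpw u n = gpw u n ** iota (iter n psi b).
Proof.
elim: n => [|n IH]; first by rewrite gpw0 gmulr1 gmul1.
by rewrite !gpwSr gmulA IH iterS -iota_rel -!gmulA gmul_gconj.
Qed.

Lemma hnn_normalMu x : hnn_normal x -> hnn_normal (u ** x).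
Proof. by case=> N [M [b ->]]; exists N.+1, M, b; rewrite !gmulA. Qed.

Lemma hnn_normalMVu x : hnn_normal x -> hnn_normal (ginv u ** x).
Proof.
case=> [[|N]] [M [b ->]].
  exists 0%N, M.+1, (psi b).
  by rewrite -iota_rel /gconj gpwS !gpw0 !gmul1 !gmulA gmulrK.
by exists N, M, b; rewrite gpwS !gmulA gmulV gmul1.
Qed.

Lemma hnn_normalMiota c x : hnn_normal x -> hnn_normal (iota c ** x).
Proof.
case=> N [M [b ->]]; exists N, M, (iter N psi c ** b).
by rewrite !gmulA iota_gpw iota_hom !gmulA.
Qed.

Lemma gen_hnn_normal (S : pi -> Prop) :
  (forall y, S y -> [\/ y = u, y = ginv u | exists b, y = iota b]) ->
  forall x, gen S x -> hnn_normal x.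
Proof.
move=> S_gen x gx.
suff [Mx _] : (forall y, hnn_normal y -> hnn_normal (x ** y)) /\
              (forall y, hnn_normal y -> hnn_normal (ginv x ** y)).
  rewrite -(gmulr1 x); apply: Mx; exists 0%N, 0%N, (gone B).
  by rewrite (hom1 iota_hom) !gpw0 !gmulr1.
elim: gx => {x} [x /S_gen [->|->|[b ->]]| |x y _ [Mx MVx] _ [My MVy]|x _ [Mx MVx]].
- by split; [exact: hnn_normalMu | exact: hnn_normalMVu].
- by rewrite ginvK; split; [exact: hnn_normalMVu | exact: hnn_normalMu].
- by rewrite -(homV iota_hom); split; exact: hnn_normalMiota.
- by rewrite ginv1; split=> y; rewrite gmul1.
- by split=> z nz; rewrite ?ginvM -gmulA; [apply: Mx; apply: My | apply: MVy; apply: MVx].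
- by rewrite ginvK.
Qed.

Variable phi : pi -> int.
Hypotheses (phi_hom : is_hom_Z phi) (phi_iota : forall b, phi (iota b) = 0).

Lemma hnn_normal_kernel x : phi u != 0 -> hnn_normal x -> phi x = 0 ->
  exists N b, x = gpw u N ** iota b ** gpw (ginv u) N.
Proof.
move=> u_nz [N [M [b ->]]]; rewrite !phi_hom !homZ_gpw // homZV // phi_iota addr0.
rewrite mulrN => /eqP; rewrite subr_eq0 => /eqP /(mulIf u_nz) [<-].
by exists N, b.
Qed.

End NormalForm.

Section HNNKernel.
Variables (pi B : group) (psi : B -> B) (iota : B -> pi) (t : pi) (phi : pi -> int).
Hypotheses (iota_hom : is_hom iota) (phi_hom : is_hom_Z phi)
           (phi_t : phi t = 1) (phi_iota : forall b, phi (iota b) = 0)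
           (pi_gen : forall x, gen (fun y => y = t \/ exists b, y = iota b) x).

Lemma asc_hnn_kernel :
  (forall b, gconj t (iota b) = iota (psi b)) ->
  forall y, phi y = 0 -> exists N b, iter N (gconj t) y = iota b.
Proof.
move=> iota_rel y y0.
have S_gen z : z = t \/ (exists b, z = iota b) ->
    [\/ z = t, z = ginv t | exists b, z = iota b].
  by case=> [->|[b ->]]; [apply: Or31 | apply: Or33; exists b].
have t_nz : phi t != 0 by rewrite phi_t.
have [N [b ->]] := hnn_normal_kernel phi_hom phi_iota t_nz
  (gen_hnn_normal iota_hom iota_rel S_gen (pi_gen y)) y0.
by exists N, b; rewrite gconj_gpw !gmulA gpwVK gmul1 -gmulA gpwVK gmulr1.
Qed.

Lemma desc_hnn_kernel :
  (forall b, t ** iota b ** ginv t = iota (psi b)) ->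
  forall y, phi y = 0 -> exists N b, y = iter N (gconj t) (iota b).
Proof.
move=> iota_rel y y0.
have iota_relV b : gconj (ginv t) (iota b) = iota (psi b) by rewrite /gconj ginvK.
have S_gen z : z = t \/ (exists b, z = iota b) ->
    [\/ z = ginv t, z = ginv (ginv t) | exists b, z = iota b].
  by case=> [->|[b ->]]; [apply: Or32; rewrite ginvK | apply: Or33; exists b].
have tV_nz : phi (ginv t) != 0 by rewrite homZV // phi_t.
have [N [b ->]] := hnn_normal_kernel phi_hom phi_iota tV_nz
  (gen_hnn_normal iota_hom iota_relV S_gen (pi_gen y)) y0.
by exists N, b; rewrite gconj_gpw ginvK.
Qed.

End HNNKernel.

Section PolyAction.
Variables (V : zmodType) (T : {additive V -> V}).

Lemma iter_is_zmod_morphism n : zmod_morphism (iter n T).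
Proof. by elim: n => [//|n IH] x y; rewrite !iterS IH raddfB. Qed.
HB.instance Definition _ n :=
  GRing.isZmodMorphism.Build V V (iter n T) (iter_is_zmod_morphism n).

Definition pact (p : {poly int}) (x : V) : V := \sum_(i < size p) iter i T x *~ p`_i.

Lemma pact_is_zmod_morphism (p : {poly int}) : zmod_morphism (pact p).
Proof.
by move=> x y; rewrite /pact -sumrB; apply: eq_bigr => i _; rewrite raddfB mulrzBl.
Qed.
HB.instance Definition _ p :=
  GRing.isZmodMorphism.Build V V (pact p) (pact_is_zmod_morphism p).

Lemma pact0p x : pact 0 x = 0.
Proof. by rewrite /pact size_poly0 big_ord0. Qed.

Lemma pact_iter (p : {poly int}) n x : pact p (iter n T x) = iter n T (pact p x).
Proof.
rewrite /pact raddf_sum; apply: eq_bigr => i _.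
by rewrite raddfMz /= -!iterD addnC.
Qed.

Lemma pact_widen (p : {poly int}) m x : (size p <= m)%N ->
  pact p x = \sum_(i < m) iter i T x *~ p`_i.
Proof.
move=> le_p_m; rewrite /pact (big_ord_widen m (fun i => iter i T x *~ p`_i) le_p_m).
rewrite big_mkcond; apply: eq_bigr => i _; case: ltnP => // le_p_i.
by rewrite nth_default // mulrz0.
Qed.

Definition comb n m (h : 'I_n -> V) (W : 'M[int]_(m, n)) (i : 'I_m) : V :=
  \sum_j h j *~ W i j.

Lemma comb1 n (h : 'I_n -> V) : comb h 1%:M =1 h.
Proof.
move=> i; rewrite /comb (bigD1 i) //= mxE eqxx mulr1z big1 ?addr0 // => j /negbTE ji.
by rewrite mxE eq_sym ji mulr0z.
Qed.

Lemma combM n m l (h : 'I_n -> V) (C : 'M[int]_(m, n)) (D : 'M[int]_(l, m)) :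
  comb (comb h C) D =1 comb h (D *m C).
Proof.
move=> i; rewrite /comb; under eq_bigr do rewrite mulrz_suml.
rewrite exchange_big /=; apply: eq_bigr => j _; rewrite mxE mulrz_sumr.
by apply: eq_bigr => k _; rewrite mulrzA_C mulrC.
Qed.

Lemma comb_raddf n m (h : 'I_n -> V) (W : 'M[int]_(m, n)) i :
  T (comb h W i) = comb (T \o h) W i.
Proof. by rewrite raddf_sum; apply: eq_bigr => j _; rewrite raddfMz. Qed.

Lemma horner_mx_sum (R : comNzRingType) r (C : 'M[R]_r.+1) (p : {poly R}) :
  horner_mx C p = \sum_(k < size p) p`_k *: C ^+ k.
Proof.
rewrite -[p in horner_mx C p]coefK poly_def rmorph_sum; apply: eq_bigr => k _.
by rewrite /= horner_mxZ rmorphXn /= horner_mx_X.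
Qed.

Lemma comb_horner_mx r (h : 'I_r.+1 -> V) (C : 'M[int]_r.+1) (p : {poly int}) i :
  \sum_(k < size p) comb h (C ^+ k) i *~ p`_k = comb h (horner_mx C p) i.
Proof.
rewrite /comb; under eq_bigr do rewrite mulrz_suml.
rewrite exchange_big /=; apply: eq_bigr => j _.
rewrite horner_mx_sum summxE mulrz_sumr; apply: eq_bigr => k _.
by rewrite mxE mulrzA_C.
Qed.

Lemma comb_char_poly r (h : 'I_r.+1 -> V) (C : 'M[int]_r.+1) i :
  \sum_(k < r.+2) comb h (C ^+ k) i *~ (char_poly C)`_k = 0.
Proof.
rewrite -(size_char_poly C) comb_horner_mx Cayley_Hamilton /comb big1 // => j _.
by rewrite mxE mulr0z.
Qed.

Variables (r : nat) (h : 'I_r.+1 -> V) (C : 'M[int]_r.+1).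

Lemma pact_char_poly_stable :
  (forall i, T (h i) = comb h C i) -> forall i, pact (char_poly C) (h i) = 0.
Proof.
move=> Th i; have iterTh n j : iter n T (h j) = comb h (C ^+ n) j.
  elim: n j => [|n IH] j; first by rewrite expr0 comb1.
  by rewrite iterS IH comb_raddf exprSr -combM; apply: eq_bigr => k _; rewrite /= Th.
rewrite (pact_widen (m := r.+2)) ?size_char_poly //.
under eq_bigr do rewrite iterTh.
exact: comb_char_poly.
Qed.

(* The reciprocal polynomial [t^(r+1) chi_C(1/t)]. *)
Definition char_poly_rev := \poly_(k < r.+2) (char_poly C)`_(r.+1 - k).

Lemma char_poly_rev_coef0 : char_poly_rev`_0 = 1.
Proof.
rewrite coef_poly /= subn0.
by have := monicP (char_poly_monic C); rewrite /lead_coef size_char_poly.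
Qed.

Lemma pact_char_poly_rev_stable :
  (forall i, h i = T (comb h C i)) -> forall i, pact char_poly_rev (h i) = 0.
Proof.
move=> hT i; have iterTh n j : h j = iter n T (comb h (C ^+ n) j).
  elim: n j => [|n IH] j; first by rewrite expr0 comb1.
  rewrite IH exprSr -combM iterSr comb_raddf; congr (iter n T (comb _ _ j)).
  by apply: funext => k; rewrite /= -hT.
rewrite (pact_widen (m := r.+2)) ?size_poly //.
(* [T^k h = T^(r+1) (C^(r+1-k) h)] pulls [T^(r+1)] out of the whole sum. *)
have shift (k : 'I_r.+2) : iter k T (h i) *~ char_poly_rev`_k =
    iter r.+1 T (comb h (C ^+ (r.+1 - k)) i *~ (char_poly C)`_(r.+1 - k)).
  rewrite coef_poly ltn_ord raddfMz /= (iterTh (r.+1 - k)%N) -iterD subnKC //.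
  by rewrite -ltnS.
under eq_bigr do rewrite shift.
rewrite -raddf_sum (reindex_inj rev_ord_inj).
under eq_bigr => k _ do rewrite /= subSS subKn ?leq_ord //.
by rewrite comb_char_poly raddf0.
Qed.

End PolyAction.

Lemma int_mul_eq1 (a b : int) : a * b = 1 -> b = 1 \/ b = -1.
Proof. by move=> /intUnitRing.unitzPl; rewrite qualifE => /pred2P. Qed.

Lemma det_mulmx_rowsub (R : comNzRingType) n m (W : 'M[R]_(n, m)) (A : 'M[R]_(m, n)) :
  \det (W *m A) = \sum_(f : {ffun 'I_n -> 'I_m}) (\prod_i W i (f i)) * \det (rowsub f A).
Proof.
rewrite /determinant.
transitivity (\sum_(s : 'S_n) \sum_(f : {ffun 'I_n -> 'I_m})
    (-1) ^+ s * \prod_i (W i (f i) * A (f i) (s i))).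
  apply: eq_bigr => s _; rewrite -mulr_sumr; congr (_ * _).
  under eq_bigr do rewrite mxE.
  by rewrite bigA_distr_bigA.
rewrite exchange_big /=; apply: eq_bigr => f _; rewrite mulr_sumr; apply: eq_bigr => s _.
by rewrite big_split /= mulrCA; congr (_ * (_ * _)); apply: eq_bigr => i _; rewrite !mxE.
Qed.

Section LaurentDivisibility.
Implicit Types d g p q : {poly int}.

Lemma ldvd_add d p q : ldvd d p -> ldvd d q -> ldvd d (p + q).
Proof.
move=> [N [r e]] [M [r' e']]; exists (N + M)%N, ('X^M * r + 'X^N * r').
by rewrite exprD mulrDr mulrDl -!mulrA -e -e' !mulrA (mulrC 'X^N).
Qed.

Lemma ldvd_mull d c q : ldvd d q -> ldvd d (c * q).
Proof. by move=> [N [r e]]; exists N, (c * r); rewrite mulrCA e mulrA. Qed.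

Lemma ldvd_sum d (I : Type) (l : seq I) (F : I -> {poly int}) :
  (forall i, ldvd d (F i)) -> ldvd d (\sum_(i <- l) F i).
Proof.
move=> dF; elim: l => [|i l IH]; last by rewrite big_cons; apply: ldvd_add.
by rewrite big_nil; exists 0%N, 0; rewrite mulr0 mul0r.
Qed.

Lemma top_coef_ldvd d g (a : nat) : g \is monic -> ldvd d ('X^a * g) ->
  top_coef d = 1 \/ top_coef d = -1.
Proof.
move=> g_monic [N [r e]]; apply: (@int_mul_eq1 (lead_coef r)).
by rewrite -lead_coefM -e !lead_coefM !lead_coefXn (monicP g_monic) !mul1r.
Qed.

Lemma bot_coef_exists p : p != 0 ->
  exists k, [/\ p`_k != 0, forall i, (i < k)%N -> p`_i = 0 & bot_coef p = p`_k].
Proof.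
move=> p_nz; have p_has : has (fun c => c != 0) p.
  apply/hasP; exists (lead_coef p); last by rewrite lead_coef_eq0.
  by rewrite /lead_coef mem_nth // ltn_predL size_poly_gt0.
exists (find (fun c => c != 0) p); split=> //; first exact: (nth_find 0 p_has).
by move=> i lt_i; apply/eqP/negbFE/(before_find 0 lt_i).
Qed.

Lemma bot_coef_spec p k : p`_k != 0 -> (forall i, (i < k)%N -> p`_i = 0) ->
  bot_coef p = p`_k.
Proof.
move=> pk_nz below_k; have p_nz : p != 0 by apply: contraNneq pk_nz => ->; rewrite coef0.
have [l [pl_nz below_l ->]] := bot_coef_exists p_nz.
case: (ltngtP l k) => [lt_lk | lt_kl | -> //].
  by rewrite below_k ?eqxx in pl_nz.
by rewrite below_l ?eqxx in pk_nz.
Qed.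

Lemma bot_coefM p q : bot_coef (p * q) = bot_coef p * bot_coef q.
Proof.
have [->|p_nz] := eqVneq p 0; first by rewrite mul0r /bot_coef coef0 mul0r.
have [->|q_nz] := eqVneq q 0; first by rewrite mulr0 /bot_coef coef0 mulr0.
have [a [pa_nz below_a ->]] := bot_coef_exists p_nz.
have [b [qb_nz below_b ->]] := bot_coef_exists q_nz.
have below_ab i : (i < a + b)%N -> (p * q)`_i = 0.
  move=> lt_i; rewrite coefM big1 // => j _.
  have [lt_ja|le_aj] := ltnP j a; first by rewrite below_a ?mul0r.
  by rewrite below_b ?mulr0 //; have := ltn_ord j; lia.
have pq_ab : (p * q)`_(a + b) = p`_a * q`_b.
  rewrite coefM (bigD1 (Ordinal (leq_addr b a : (a < (a + b).+1)%N))) //= addKn.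
  rewrite big1 ?addr0 // => j /eqP ne_ja.
  have [lt_ja|le_aj] := ltnP j a; first by rewrite below_a ?mul0r.
  rewrite below_b ?mulr0 //; have := ltn_ord j.
  have : (j : nat) != a by apply: contra_not_neq ne_ja => e; apply: val_inj.
  lia.
by rewrite (bot_coef_spec _ below_ab) ?pq_ab ?mulf_neq0.
Qed.

Lemma bot_coef_ldvd d g (a : nat) : g`_0 = 1 -> ldvd d ('X^a * g) ->
  bot_coef d = 1 \/ bot_coef d = -1.
Proof.
move=> g0 [N [r e]]; apply: (@int_mul_eq1 (bot_coef r)).
have botX n : bot_coef 'X^n = 1.
  rewrite (bot_coef_spec (k := n)) ?coefXn ?eqxx ?oner_neq0 // => i lt_in.
  by rewrite coefXn ltn_eqF.
have botg : bot_coef g = 1 by rewrite (bot_coef_spec (k := 0)) ?g0 ?oner_neq0.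
by rewrite -bot_coefM -e !bot_coefM !botX botg !mul1r.
Qed.

End LaurentDivisibility.

Section AbelianizedKernel.
Variables (pi : group) (phi : pi -> int).
Hypothesis phi_hom : is_hom_Z phi.
Local Notation commK := (in_commK phi).

Lemma commK_gconj g x : commK x -> commK (gconj g x).
Proof.
elim=> {x} [x [a [b [a0 b0 ->]]]| |x y _ gx _ gy|x _ gx].
- apply: gen_base; exists (gconj g a), (gconj g b).
  by rewrite !homZ_gconj // !gconjM !gconjV.
- by rewrite /gconj gmulr1 gmulV; exact: gen_one.
- by rewrite gconjM; exact: gen_mul.
- by rewrite gconjV; exact: gen_inv.
Qed.

Definition kcoset (x : pi) : pi -> Prop := fun y => commK (ginv x ** y).

Lemma kcosetP x y : kcoset x = kcoset y <-> commK (ginv x ** y).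
Proof.
split=> [xy | cxy].
  have : kcoset y y by rewrite /kcoset gmulV; exact: gen_one.
  by rewrite -xy.
apply/funext => z; apply/propext; rewrite /kcoset.
have -> : ginv x ** z = (ginv x ** y) ** (ginv y ** z) by rewrite -gmulA gmulVKr.
split=> [cxz | cyz]; last exact: gen_mul.
by rewrite -[ginv y ** z](gmulKr (ginv x ** y)); exact: gen_mul (gen_inv cxy) cxz.
Qed.

(* The Alexander module [K/[K,K]], [K = Ker phi], realized as the set of
   cosets of [[K,K]] in [K]. *)
Definition Kab := {X : pi -> Prop | exists x, phi x = 0 /\ X = kcoset x}.
HB.instance Definition _ := gen_eqMixin Kab.
HB.instance Definition _ := gen_choiceMixin Kab.

(* Elements outside [Ker phi] are sent to the class of [1] (junk value). *)
Definition kernel_part (x : pi) := if phi x == 0 then x else gone pi.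

Lemma kernel_part0 x : phi (kernel_part x) = 0.
Proof. by rewrite /kernel_part; case: eqP => // _; rewrite homZ1. Qed.

Definition kab (x : pi) : Kab :=
  exist _ (kcoset (kernel_part x)) (ex_intro _ _ (conj (kernel_part0 x) erefl)).

Lemma Kab_inj (X Y : Kab) : sval X = sval Y -> X = Y.
Proof. by case: X Y => [X pX] [Y pY] /= XY; apply: eq_exist. Qed.

Lemma kab_val x : phi x = 0 -> sval (kab x) = kcoset x.
Proof. by move=> x0; rewrite /= /kernel_part x0 eqxx. Qed.

Lemma kabP x y : phi x = 0 -> phi y = 0 -> kab x = kab y <-> commK (ginv x ** y).
Proof.
move=> x0 y0; rewrite -kcosetP -kab_val // -kab_val //.
by split=> [-> // | /Kab_inj].
Qed.

Definition kab_repr (X : Kab) : pi := sval (cid (svalP X)).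

Lemma kab_repr0 X : phi (kab_repr X) = 0.
Proof. by rewrite /kab_repr; case: cid => x []. Qed.

Lemma kab_reprK X : kab (kab_repr X) = X.
Proof.
apply: Kab_inj; rewrite kab_val ?kab_repr0 //.
by case: X => X pX; rewrite /kab_repr; case: cid => x [_ e] /=.
Qed.

Lemma kab_ind (P : Kab -> Prop) : (forall x, phi x = 0 -> P (kab x)) -> forall X, P X.
Proof. by move=> Pkab X; rewrite -(kab_reprK X); apply/Pkab/kab_repr0. Qed.

Lemma kab_reprP x : phi x = 0 -> commK (ginv (kab_repr (kab x)) ** x).
Proof. by move=> x0; apply/kabP => //; [exact: kab_repr0 | rewrite kab_reprK]. Qed.

Definition kab_add (X Y : Kab) := kab (kab_repr X ** kab_repr Y).
Definition kab_opp (X : Kab) := kab (ginv (kab_repr X)).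

Lemma kab_addE x y : phi x = 0 -> phi y = 0 -> kab_add (kab x) (kab y) = kab (x ** y).
Proof.
move=> x0 y0; apply/kabP; rewrite ?phi_hom ?kab_repr0 ?x0 ?y0 ?addr0 //.
have -> : ginv (kab_repr (kab x) ** kab_repr (kab y)) ** (x ** y) =
    (ginv (kab_repr (kab y)) ** y) ** gconj y (ginv (kab_repr (kab x)) ** x).
  by rewrite /gconj ginvM !gmulA gmulrK.
exact: gen_mul (kab_reprP y0) (commK_gconj _ (kab_reprP x0)).
Qed.

Lemma kab_oppE x : phi x = 0 -> kab_opp (kab x) = kab (ginv x).
Proof.
move=> x0; apply/kabP; rewrite ?homZV ?kab_repr0 ?x0 ?oppr0 //.
have -> : ginv (ginv (kab_repr (kab x))) ** ginv x =
    gconj (ginv x) (ginv (ginv (kab_repr (kab x)) ** x)).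
  by rewrite /gconj !ginvK ginvM ginvK gmulA gmulrV gmul1.
exact/commK_gconj/gen_inv/kab_reprP.
Qed.

Lemma kab_addA : associative kab_add.
Proof.
elim/kab_ind=> x x0; elim/kab_ind=> y y0; elim/kab_ind=> z z0.
by rewrite !kab_addE ?gmulA // phi_hom ?x0 ?y0 ?z0 ?addr0.
Qed.

(* The commutator of two kernel elements lies in [[K,K]]. *)
Lemma kab_addC : commutative kab_add.
Proof.
elim/kab_ind=> x x0; elim/kab_ind=> y y0.
rewrite !kab_addE //; apply/kabP; rewrite ?phi_hom ?x0 ?y0 ?addr0 // ginvM.
by apply: gen_base; exists y, x.
Qed.

Lemma kab_add0 : left_id (kab (gone pi)) kab_add.
Proof. by elim/kab_ind=> x x0; rewrite kab_addE ?gmul1 ?homZ1. Qed.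

Lemma kab_addN : left_inverse (kab (gone pi)) kab_opp kab_add.
Proof. by elim/kab_ind=> x x0; rewrite kab_oppE // kab_addE ?gmulV ?homZV ?x0 ?oppr0. Qed.

HB.instance Definition _ := GRing.isZmodule.Build Kab kab_addA kab_addC kab_add0 kab_addN.

Lemma kabM x y : phi x = 0 -> phi y = 0 -> kab (x ** y) = kab x + kab y.
Proof. by move=> x0 y0; rewrite -kab_addE. Qed.

Lemma kabV x : phi x = 0 -> kab (ginv x) = - kab x.
Proof. by move=> x0; rewrite -kab_oppE. Qed.

Lemma kab1 : kab (gone pi) = 0.
Proof. by []. Qed.

Lemma kab_eq0 x : phi x = 0 -> kab x = 0 <-> commK x.
Proof.
move=> x0; rewrite -kab1 kabP ?homZ1 //; split=> [/gen_inv | cx].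
  by rewrite ginvM ginvK ginv1 gmul1.
by rewrite gmulr1; exact: gen_inv.
Qed.

Lemma kab_gconj_ker k x : phi k = 0 -> phi x = 0 -> kab (gconj k x) = kab x.
Proof.
move=> k0 x0; have kV0 : phi (ginv k) = 0 by rewrite homZV // k0 oppr0.
rewrite /gconj !kabM ?phi_hom ?kV0 ?x0 ?addr0 // kabV //.
by rewrite addrC addrA addrN add0r.
Qed.

Lemma kab_gpw x n : phi x = 0 -> kab (gpw x n) = kab x *+ n.
Proof.
move=> x0; elim: n => [|n IH]; first by rewrite mulr0n.
by rewrite gpwS kabM ?homZ_gpw ?x0 ?mulr0 // IH mulrS.
Qed.

Lemma kab_gpow x z : phi x = 0 -> kab (gpow x z) = kab x *~ z.
Proof.
move=> x0; case: z => n; first exact: kab_gpw.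
have xV0 : phi (ginv x) = 0 by rewrite homZV // x0 oppr0.
change (gpow x (Negz n)) with (gpw (ginv x) n.+1).
by rewrite kab_gpw // kabV // NegzE mulrNz -mulNrn.
Qed.

Lemma kab_prod_list (I : Type) (F : I -> pi) (l : seq I) :
  (forall i, phi (F i) = 0) -> kab (prod_list (map F l)) = \sum_(i <- l) kab (F i).
Proof.
move=> F0; elim: l => [|i l IH]; first by rewrite big_nil.
by rewrite big_cons -IH -kabM ?F0 ?homZ_prod_list ?big1.
Qed.

Variable s : pi.

Definition kab_shift (X : Kab) : Kab := kab (gconj s (kab_repr X)).

Lemma kab_shiftE x : phi x = 0 -> kab_shift (kab x) = kab (gconj s x).
Proof.
move=> x0; apply/kabP; rewrite ?homZ_gconj ?kab_repr0 //.
by rewrite -gconjV -gconjM; exact/commK_gconj/kab_reprP.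
Qed.

Lemma kab_shift_is_zmod_morphism : zmod_morphism kab_shift.
Proof.
elim/kab_ind=> x x0; elim/kab_ind=> y y0.
have yV0 : phi (ginv y) = 0 by rewrite homZV // y0 oppr0.
rewrite -kabV // -kabM ?kab_shiftE ?phi_hom ?x0 ?yV0 ?addr0 //.
by rewrite gconjM gconjV kabM ?kabV ?homZV ?homZ_gconj ?x0 ?y0 ?oppr0.
Qed.
HB.instance Definition _ := GRing.isZmodMorphism.Build Kab Kab kab_shift
  kab_shift_is_zmod_morphism.

Lemma kab_shift_inj : injective kab_shift.
Proof.
apply: raddf_inj; elim/kab_ind=> x x0 /=; rewrite kab_shiftE // => /kab_eq0.
rewrite homZ_gconj // => /(_ x0) /(commK_gconj (ginv s)); rewrite gconjK => cx.
exact/kab_eq0.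
Qed.

Lemma iter_kab_shift g n x : phi g = phi s -> phi x = 0 ->
  iter n kab_shift (kab x) = kab (iter n (gconj g) x).
Proof.
move=> gs x0; elim: n => [//|n IH].
have lift_s y : gconj g y = gconj (ginv s ** g) (gconj s y) by rewrite -gconjMr gmulVKr.
rewrite !iterS IH lift_s kab_shiftE ?homZ_iter_gconj // [in RHS]kab_gconj_ker //.
  by rewrite phi_hom homZV // gs addNr.
by rewrite homZ_gconj // homZ_iter_gconj.
Qed.

Lemma homZ_act p x : phi x = 0 -> phi (act s p x) = 0.
Proof.
move=> x0; rewrite /act homZ_prod_list // big1 // => i _.
by rewrite homZ_gpow // tpowE homZ_iter_gconj // x0 mulr0.
Qed.

Lemma homZ_evalv n (k : 'I_n -> pi) v : (forall j, phi (k j) = 0) -> phi (evalv s k v) = 0.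
Proof. by move=> k0; rewrite /evalv homZ_prod_list // big1 // => j _; rewrite homZ_act. Qed.

Lemma kab_act p x : phi x = 0 -> kab (act s p x) = pact kab_shift p (kab x).
Proof.
move=> x0; rewrite /act kab_prod_list => [|i]; last first.
  by rewrite homZ_gpow // tpowE homZ_iter_gconj // x0 mulr0.
rewrite /pact -(big_mkord xpredT (fun i => iter i kab_shift (kab x) *~ p`_i)).
rewrite /index_iota subn0; apply: eq_bigr => i _.
by rewrite kab_gpow tpowE ?homZ_iter_gconj // (iter_kab_shift i (erefl (phi s))).
Qed.

Lemma kab_evalv n (k : 'I_n -> pi) (v : 'rV[{poly int}]_n) : (forall j, phi (k j) = 0) ->
  kab (evalv s k v) = \sum_(j <- enum 'I_n) pact kab_shift (v ord0 j) (kab (k j)).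
Proof.
move=> k0; rewrite /evalv kab_prod_list => [|j]; last exact: homZ_act.
by apply: eq_bigr => j _; rewrite kab_act.
Qed.

(* A polynomial killing the Alexander module kills [e_j], so for each [j]
   some [t^N g e_j] is a combination of relations; the determinant of the
   resulting diagonal matrix is a combination of maximal minors of [A]. *)
Lemma gcd_minors_ldvd_annihilator n m (k : 'I_n -> pi) (A : 'M[{poly int}]_(m, n)) d g :
  presents phi s k A -> gcd_minors A d -> (forall X, pact kab_shift g X = 0) ->
  exists a, ldvd d ('X^a * g ^+ n).
Proof.
move=> [k0 _ _ rel_span] [d_minors _] g_ann.
have rel (j : 'I_n) : exists Nw : nat * 'rV[{poly int}]_m,
    'X^(Nw.1) *: (\row_l (if l == j then g else 0)) = Nw.2 *m A.
  suff /rel_span [N [w e]] : in_commK phi (evalv s k (\row_l (if l == j then g else 0))).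
    by exists (N, w).
  apply/kab_eq0; first exact: homZ_evalv.
  rewrite kab_evalv // big1_seq // => l _; rewrite mxE.
  by case: eqP => _; rewrite ?g_ann ?pact0p.
have [Nw relNw] := fin_all_exists rel.
pose W := \matrix_(j, l) (Nw j).2 ord0 l.
have WA : W *m A = diag_mx (\row_j ('X^((Nw j).1) * g)).
  apply/matrixP => j l; have := congr1 (fun M : 'rV[{poly int}]_n => M ord0 l) (relNw j).
  rewrite !mxE => rel_jl; under eq_bigr do rewrite mxE.
  by rewrite -rel_jl eq_sym; case: (j == l); rewrite ?mulr0.
exists (\sum_j (Nw j).1)%N.
have := det_mulmx_rowsub W A; rewrite WA det_diag.
under eq_bigr do rewrite mxE; rewrite big_split /= -prodrXr prodr_const card_ord => ->.
by apply: ldvd_sum => f; apply: ldvd_mull; exact: d_minors.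
Qed.

Section BaseGroupImage.
Variables (B : group) (psi : B -> B) (iota : B -> pi).
Hypotheses (B_fin_gen : fin_gen B) (iota_hom : is_hom iota)
           (iota0 : forall b, phi (iota b) = 0).

(* The generators are padded with [1] so that the index type is nonempty. *)
Lemma kab_image_span : exists r (bs : 'I_r.+1 -> B),
  forall b, exists c : 'I_r.+1 -> int, kab (iota b) = \sum_j kab (iota (bs j)) *~ c j.
Proof.
have [R [gB gB_gen]] := B_fin_gen.
pose bs i := oapp gB (gone B) (unlift ord_max i).
exists R, bs => b; elim: (gB_gen b) => {b} [_ [i ->]| |x y _ [cx ex] _ [cy ey]|x _ [c e]].
- exists (fun j => (j == lift ord_max i)%:Z).
  rewrite (bigD1 (lift ord_max i)) //= eqxx mulr1z big1 ?addr0 => [|j /negbTE ->].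
    by rewrite /bs liftK.
  by rewrite mulr0z.
- by exists (fun _ => 0); rewrite (hom1 iota_hom) kab1 big1 // => j _; rewrite mulr0z.
- exists (fun j => cx j + cy j); rewrite iota_hom kabM // ex ey -big_split /=.
  by apply: eq_bigr => j _; rewrite mulrzDr.
- exists (fun j => - c j); rewrite (homV iota_hom) kabV // e -sumrN.
  by apply: eq_bigr => j _; rewrite mulrNz.
Qed.

Lemma kab_image_matrix : exists r (h : 'I_r.+1 -> Kab) (C : 'M[int]_r.+1),
  (forall b, exists c : 'I_r.+1 -> int, kab (iota b) = \sum_j h j *~ c j) /\
  (forall i, exists b, h i = kab (iota b) /\ kab (iota (psi b)) = comb h C i).
Proof.
have [r [bs span]] := kab_image_span.
have [c ec] := fin_all_exists (fun i => span (psi (bs i))).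
exists r, (fun j => kab (iota (bs j))), (\matrix_(i, j) c i j); split=> // i.
by exists (bs i); split=> //; rewrite ec; apply: eq_bigr => j _; rewrite mxE.
Qed.

End BaseGroupImage.

Hypothesis phi_s : phi s = 1.

Lemma asc_annihilator : ascHNN phi ->
  exists g : {poly int}, g \is monic /\ forall X, pact kab_shift g X = 0.
Proof.
move=> [B [psi [iota [t [[B_fg [_ [_ iota_hom]]] phi_t iota0 iota_rel univ]]]]].
have ts : phi t = phi s by rewrite phi_t phi_s.
have [r [h [C [span stable]]]] := kab_image_matrix psi B_fg iota_hom iota0.
have h_stable i : kab_shift (h i) = comb h C i.
  have [b [-> <-]] := stable i; have /= -> := iter_kab_shift 1 ts (iota0 b).
  by congr kab; apply: iota_rel.
exists (char_poly C); split; first exact: char_poly_monic.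
have iota_ann b : pact kab_shift (char_poly C) (kab (iota b)) = 0.
  have [c ->] := span b; rewrite raddf_sum big1 // => j _.
  by rewrite raddfMz /= pact_char_poly_stable // mul0rz.
elim/kab_ind=> y y0.
have pi_gen := hnn_generated (asc := true) iota_hom iota_rel univ.
have [N [b Ny]] := asc_hnn_kernel iota_hom phi_hom phi_t iota0 pi_gen iota_rel y0.
apply: (iter_inj (n := N) kab_shift_inj); rewrite -pact_iter (iter_kab_shift N ts) // Ny.
by rewrite iota_ann raddf0.
Qed.

Lemma desc_annihilator : descHNN phi ->
  exists g : {poly int}, g`_0 = 1 /\ forall X, pact kab_shift g X = 0.
Proof.
move=> [B [psi [iota [t [[B_fg [_ [_ iota_hom]]] phi_t iota0 iota_rel univ]]]]].
have ts : phi t = phi s by rewrite phi_t phi_s.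
have [r [h [C [span stable]]]] := kab_image_matrix psi B_fg iota_hom iota0.
have h_stable i : h i = kab_shift (comb h C i).
  have [b [-> <-]] := stable i; have /= -> := iter_kab_shift 1 ts (iota0 (psi b)).
  by rewrite -(iota_rel b) /gconj !gmulA gmulV gmul1 gmulrVK.
exists (char_poly_rev C); split; first exact: char_poly_rev_coef0.
have iota_ann b : pact kab_shift (char_poly_rev C) (kab (iota b)) = 0.
  have [c ->] := span b; rewrite raddf_sum big1 // => j _.
  by rewrite raddfMz /= pact_char_poly_rev_stable // mul0rz.
elim/kab_ind=> y y0.
have pi_gen := hnn_generated (asc := false) iota_hom iota_rel univ.
have [N [b ->]] := desc_hnn_kernel iota_hom phi_hom phi_t iota0 pi_gen iota_rel y0.
by rewrite -(iter_kab_shift N ts) ?iota0 // pact_iter iota_ann raddf0.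
Qed.

End AbelianizedKernel.

Theorem lemma4p1 (pi : group) (phi : pi -> int) :
  is_epi_Z phi ->
  (ascHNN phi ->
     forall d : {poly int}, is_alex_poly phi d ->
       top_coef d = 1 \/ top_coef d = -1) /\
  (descHNN phi ->
     forall d : {poly int}, is_alex_poly phi d ->
       bot_coef d = 1 \/ bot_coef d = -1).
Proof.
move=> [phi_hom _]; split=> hnn d [s [n [m [k [A [phi_s pres minors]]]]]].
- have [g [g_monic g_ann]] := asc_annihilator phi_hom phi_s hnn.
  have [a d_dvd] := gcd_minors_ldvd_annihilator pres minors g_ann.
  exact: top_coef_ldvd (monic_exp n g_monic) d_dvd.
- have [g [g0 g_ann]] := desc_annihilator phi_hom phi_s hnn.
  have [a d_dvd] := gcd_minors_ldvd_annihilator pres minors g_ann.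
  by apply: bot_coef_ldvd d_dvd; rewrite -horner_coef0 horner_exp horner_coef0 g0 expr1n.
Qed.
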